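(* Let $\varphi$ be a strongly convex function and let $\mu$ be a positive finite Borel measure on $\mathbb{D}$. Then $\|B(\mu)\|_{(L^\varphi)^*}<\infty$ if and only if $\int_{\mathbb{D}}h\,d\mu<\infty$ for every $h\in\operatorname{Har}^+_\varphi$. Moreover, $$\|B(\mu)\|_{(L^\varphi)^*}=\sup\Big\{\int_{\mathbb{D}}h\,d\mu:\ h=P[w]\in\operatorname{Har}^+_\varphi,\ \|w\|_\varphi\le1\Big\}.$$
   Context: A function $\varphi:\mathbb{R}\to[0,\infty)$ is strongly convex if it is convex, nondecreasing, $\lim_{t\to\infty}\varphi(t)/t=\infty$, and there are $M,K\ge0$, $t_0\in\mathbb{R}$ with $\varphi(t+2)\le M\varphi(t)+K$ for $t\ge t_0$. $L^\varphi(\mathbb{T})$ is the Orlicz space of measurable $u$ with $\varphi\circ|u|\in L^1(m)$ ($m$ normalized Lebesgue measure on $\mathbb{T}$); $\varphi$ is modified on some $[0,t_0]$ to a convex function on $[0,\infty)$ vanishing at $0$, $L^\varphi$ carries the norm $\|u\|_\varphi=\inf\{t>0:\int\varphi(|u|/t)dm\le t\}$, and $(L^\varphi)^*$ is the dual with dual norm. $P[w](z)=\int_{\mathbb{T}}P_z(\zeta)w(\zeta)dm(\zeta)$ with $P_z(\zeta)=\frac{1-|z|^2}{|\zeta-z|^2}$; $\operatorname{Har}^+_\varphi=\{P[w]:0\le w\in L^\varphi\}$. The Poisson balayage is $B(\mu)(\zeta)=\int_{\mathbb{D}}P_z(\zeta)\,d\mu(z)$. *)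

From HB Require Import structures.
From mathcomp Require Import all_boot all_order all_algebra.
From mathcomp Require Import all_classical all_reals all_analysis.
Set Implicit Arguments. Unset Strict Implicit. Unset Printing Implicit Defensive.
Import Order.TTheory GRing.Theory Num.Theory.
Import numFieldNormedType.Exports.
Local Open Scope classical_set_scope.
Local Open Scope ring_scope.

Section Orlicz.
Variable R : realType.

Definition strongly_convex (phi : R -> R) : Prop :=
  (forall t, 0 <= phi t) /\
  (forall x y l, 0 <= l <= 1 -> phi (l * x + (1 - l) * y) <= l * phi x + (1 - l) * phi y) /\
  (forall x y, x <= y -> phi x <= phi y) /\
  (forall A, exists B, forall t, B < t -> A < phi t / t) /\
  (exists M K t0, 0 <= M /\ 0 <= K /\ forall t, t0 <= t -> phi (t + 2) <= M * phi t + K).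

Definition modification (phi psi : R -> R) : Prop :=
  psi 0 = 0 /\
  (forall t, 0 <= t -> 0 <= psi t) /\
  (forall x y l, 0 <= x -> 0 <= y -> 0 <= l <= 1 ->
      psi (l * x + (1 - l) * y) <= l * psi x + (1 - l) * psi y) /\
  (exists t1, 0 <= t1 /\ forall t, t1 <= t -> psi t = phi t).

(** The circle T parametrized by theta in [0, 2 pi]; m = normalized Lebesgue measure. *)
Definition circ : set R := `[0, 2 * pi]%classic.

Definition mint (f : R -> \bar R) : \bar R :=
  ((2 * pi)^-1)%:E * (\int[@lebesgue_measure R]_(x in circ) f x)%E.

Definition Lphi (phi : R -> R) (u : R -> R) : Prop :=
  measurable_fun circ u /\ (mint (fun x => (phi `|u x|)%:E) < +oo)%E.

Definition orlicz_norm (psi : R -> R) (u : R -> R) : R :=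
  inf [set t : R | 0 < t /\ (mint (fun x => (psi (`|u x| / t))%:E) <= t%:E)%E].

Definition dual_norm (phi psi : R -> R) (g : R -> \bar R) : \bar R :=
  ereal_sup [set mint (fun x => `|(g x * (u x)%:E)%E|%E) |
             u in [set u | Lphi phi u /\ orlicz_norm psi u <= 1]].

Definition disc : set (R * R) := [set z | z.1 ^+ 2 + z.2 ^+ 2 < 1].

Definition poisson (z : R * R) (theta : R) : R :=
  (1 - (z.1 ^+ 2 + z.2 ^+ 2)) /
  ((cos theta - z.1) ^+ 2 + (sin theta - z.2) ^+ 2).

Definition Pint (w : R -> R) (z : R * R) : \bar R :=
  mint (fun theta => (poisson z theta * w theta)%:E).

Definition balayage (mu : set (R * R) -> \bar R) (theta : R) : \bar R :=
  (\int[mu]_(z in disc) (poisson z theta)%:E)%E.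

End Orlicz.
Arguments disc {R}.
Arguments circ {R}.

(* By Tonelli, int_D P[w] dmu = int_T w B(mu) dm for w >= 0, and replacing u
   by |u| changes neither the Orlicz norm nor the pairing with B(mu) >= 0, so
   the dual norm of B(mu) is the supremum of int_D P[w] dmu over nonnegative w
   in the unit ball of L^phi.  If this supremum is finite, any w in L^phi is
   scaled into the ball.  If it is infinite, choose u_k in the ball with
   int u_k B(mu) dm > 4 k 2^(k+1) and merge them into the envelope
   w = (1/2) sup_k 2^-(k+1) u_k / 2: since psi is convex with psi(0) = 0,
   int psi(w) dm <= sum_k 2^-(k+1) int psi(u_k / 2) dm <= 2, so w is in L^phi,
   while int w B(mu) dm > k for every k. *)

From HB Require Import structures.
From mathcomp Require Import all_boot all_order all_algebra.
From mathcomp Require Import all_classical all_reals all_analysis.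
From mathcomp Require Import measurable_realfun ring lra.
Set Implicit Arguments. Unset Strict Implicit. Unset Printing Implicit Defensive.
Import Order.TTheory GRing.Theory Num.Theory.
Import numFieldNormedType.Exports.
Local Open Scope classical_set_scope.
Local Open Scope ring_scope.

Section circle_integral.
Context (R : realType).
Local Notation leb := (@lebesgue_measure R).

Lemma measurable_circ : measurable (circ : set R).
Proof. exact: measurable_itv. Qed.

Lemma two_pi_gt0 : 0 < 2 * pi :> R.
Proof. by rewrite mulr_gt0 // pi_gt0. Qed.

Lemma two_pi_inv_ge0 : 0 <= (2 * pi)^-1 :> R.
Proof. by rewrite invr_ge0 ltW // two_pi_gt0. Qed.

Lemma lebesgue_circ : leb (circ : set R) = (2 * pi)%:E.
Proof.
by rewrite /circ lebesgue_measure_itv /= lte_fin two_pi_gt0 /= oppr0 adde0.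
Qed.

Lemma integral_circE (f : R -> \bar R) :
  (\int[leb]_(x in circ) f x = (2 * pi)%:E * mint f)%E.
Proof. by rewrite /mint muleA -EFinM mulfV ?mul1e // gt_eqF // two_pi_gt0. Qed.

Lemma mint_ge0 (f : R -> \bar R) :
  (forall x, circ x -> 0 <= f x)%E -> (0 <= mint f)%E.
Proof.
by move=> f0; rewrite /mint mule_ge0 ?lee_fin ?two_pi_inv_ge0 ?integral_ge0.
Qed.

Lemma ae_le_mint (f g : R -> \bar R) : (forall x, circ x -> 0 <= f x)%E ->
  measurable_fun circ f -> (forall x, circ x -> 0 <= g x)%E ->
  measurable_fun circ g ->
  {ae leb, forall x, circ x -> (f x <= g x)%E} -> (mint f <= mint g)%E.
Proof.
move=> f0 mf g0 mg fg; rewrite /mint lee_wpmul2l ?lee_fin ?two_pi_inv_ge0 //.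
by apply: ae_ge0_le_integral => //; exact: measurable_circ.
Qed.

Lemma le_mint (f g : R -> \bar R) : (forall x, circ x -> 0 <= f x)%E ->
  measurable_fun circ f -> measurable_fun circ g ->
  (forall x, circ x -> f x <= g x)%E -> (mint f <= mint g)%E.
Proof.
move=> f0 mf mg fg; rewrite /mint lee_wpmul2l ?lee_fin ?two_pi_inv_ge0 //.
by apply: ge0_le_integral => //; exact: measurable_circ.
Qed.

Lemma mintZl (k : R) (f : R -> \bar R) : 0 <= k ->
  (forall x, circ x -> 0 <= f x)%E -> measurable_fun circ f ->
  mint (fun x => k%:E * f x)%E = (k%:E * mint f)%E.
Proof.
move=> k0 f0 mf.
by rewrite /mint (ge0_integralZl_EFin leb measurable_circ f0 mf k0) muleCA.
Qed.

Lemma mintD (f g : R -> \bar R) :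
  (forall x, circ x -> 0 <= f x)%E -> measurable_fun circ f ->
  (forall x, circ x -> 0 <= g x)%E -> measurable_fun circ g ->
  mint (fun x => f x + g x)%E = (mint f + mint g)%E.
Proof.
move=> f0 mf g0 mg; rewrite /mint (ge0_integralD leb measurable_circ f0 mf g0 mg).
by rewrite ge0_muleDr // integral_ge0.
Qed.

Lemma mint_cst (k : R) : mint (fun _ => k%:E) = k%:E.
Proof.
rewrite /mint (integral_cst leb measurable_circ).
rewrite [X in (_ * (_ * X))%E](_ : _ = (2 * pi)%:E); last exact: lebesgue_circ.
by rewrite -!EFinM mulrCA mulVf ?mulr1 // gt_eqF // two_pi_gt0.
Qed.

End circle_integral.

Section poisson_kernel.
Context (R : realType).

Lemma measurable_inv : measurable_fun [set: R] (@GRing.inv R).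
Proof.
have -> : [set: R] = [set x : R | x != 0] `|` [set 0].
  by apply/seteqP; split => x //= _; have [->|] := eqVneq x 0; [right|left].
apply/measurable_funU => //; first by apply: open_measurable; exact: open_neq.
split; last exact: measurable_fun_set1.
apply: open_continuous_measurable_fun; first exact: open_neq.
by move=> x /set_mem; exact: inv_continuous.
Qed.

Lemma measurable_disc : measurable (disc : set (R * R)).
Proof.
have mf : measurable_fun [set: R * R] (fun z : R * R => z.1 ^+ 2 + z.2 ^+ 2).
  by apply: measurable_funD; apply: measurable_funX;
    [exact: measurable_fst | exact: measurable_snd].
have := mf measurableT `]-oo, 1[%classic (measurable_itv _).
by rewrite setTI; congr measurable; apply/seteqP; split => z; rewrite /= in_itv.
Qed.

Lemma measurable_poisson :
  measurable_fun [set: (R * R) * R] (fun p => poisson p.1 p.2).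
Proof.
have m1 : measurable_fun [set: (R * R) * R] (fun p => p.1.1).
  exact: measurableT_comp measurable_fst measurable_fst.
have m2 : measurable_fun [set: (R * R) * R] (fun p => p.1.2).
  exact: measurableT_comp measurable_snd measurable_fst.
have mc : measurable_fun [set: (R * R) * R] (fun p => cos p.2).
  apply: measurableT_comp measurable_snd.
  by apply: continuous_measurable_fun; exact: continuous_cos.
have ms : measurable_fun [set: (R * R) * R] (fun p => sin p.2).
  apply: measurableT_comp measurable_snd.
  by apply: continuous_measurable_fun; exact: continuous_sin.
apply: measurable_funM.
  by apply: measurable_funB => //; apply: measurable_funD; exact: measurable_funX.
apply: measurableT_comp; first exact: measurable_inv.
by apply: measurable_funD; apply: measurable_funX; exact: measurable_funB.
Qed.

Lemma poisson_ge0 (z : R * R) (t : R) : disc z -> 0 <= poisson z t.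
Proof.
rewrite /disc /poisson /= => z1.
by apply: divr_ge0; [rewrite subr_ge0 ltW | rewrite addr_ge0 // sqr_ge0].
Qed.

Definition disc_poisson (z : R * R) (t : R) : R := \1_disc z * poisson z t.

Lemma disc_poisson_ge0 z t : 0 <= disc_poisson z t.
Proof.
rewrite /disc_poisson indicE; case: (boolP (z \in disc)) => [/set_mem|_].
  by rewrite mul1r; exact: poisson_ge0.
by rewrite mul0r.
Qed.

Lemma measurable_disc_poisson :
  measurable_fun [set: (R * R) * R] (fun p => disc_poisson p.1 p.2).
Proof.
apply: measurable_funM; last exact: measurable_poisson.
apply: measurableT_comp measurable_fst.
by apply: measurable_indic; exact: measurable_disc.
Qed.

End poisson_kernel.

Section balayage.
Context (R : realType) (mu : {finite_measure set (R * R)%type -> \bar R}).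

Lemma balayageE t :
  balayage mu t = (\int[mu]_z (disc_poisson z t)%:E)%E.
Proof.
rewrite /balayage integral_mkcond; apply: eq_integral => z _.
by rewrite patchE /disc_poisson indicE; case: ifPn; rewrite ?mul1r ?mul0r.
Qed.

Lemma balayage_ge0 t : (0 <= balayage mu t)%E.
Proof.
by rewrite balayageE integral_ge0 // => z _; rewrite lee_fin disc_poisson_ge0.
Qed.

Lemma measurable_balayage : measurable_fun [set: R] (balayage mu).
Proof.
have -> : balayage mu = fun t => (\int[mu]_z (disc_poisson z t)%:E)%E.
  by apply/funext => t; exact: balayageE.
apply: (@measurable_fun_fubini_tonelli_G _ _ _ _ _ mu
  (fun p => (disc_poisson p.1 p.2)%:E)).
  by apply/measurable_EFinP; exact: measurable_disc_poisson.
by move=> p; rewrite lee_fin disc_poisson_ge0.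
Qed.

Lemma measurable_mul_balayage (w : R -> R) : measurable_fun circ w ->
  measurable_fun circ (fun t => (w t)%:E * balayage mu t)%E.
Proof.
move=> mw; apply: emeasurable_funM; first exact/measurable_EFinP.
exact: measurable_funTS measurable_balayage.
Qed.

Lemma mul_balayage_ge0 (w : R -> R) : (forall x, 0 <= w x) ->
  forall t, circ t -> (0 <= (w t)%:E * balayage mu t)%E.
Proof. by move=> w0 t _; rewrite mule_ge0 ?lee_fin ?balayage_ge0. Qed.

End balayage.

Section integral_Pint.
Context (R : realType) (mu : {finite_measure set (R * R)%type -> \bar R}).
Local Notation leb := (@lebesgue_measure R).
Variable w : R -> R.
Hypothesis w_ge0 : forall x, 0 <= w x.
Hypothesis mw : measurable_fun circ w.

(* Extending w by 0 outside circ lets Tonelli run on the whole product. *)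
Let wc : R -> R := w \_ circ.

Let mwc : measurable_fun [set: R] wc.
Proof. exact: (measurable_restrictT w (@measurable_circ R)).1 mw. Qed.

Let wc_ge0 x : 0 <= wc x.
Proof. by rewrite /wc patchE; case: ifP. Qed.

Let kernel (p : (R * R) * R) : \bar R :=
  ((2 * pi)^-1 * (disc_poisson p.1 p.2 * wc p.2))%:E.

Let measurable_kernel : measurable_fun [set: (R * R) * R] kernel.
Proof.
apply/measurable_EFinP; apply: measurable_funM; first exact: measurable_cst.
apply: measurable_funM; first exact: measurable_disc_poisson.
exact: measurableT_comp mwc measurable_snd.
Qed.

Let kernel_ge0 p : (0 <= kernel p)%E.
Proof.
rewrite /kernel lee_fin mulr_ge0 ?two_pi_inv_ge0 //.
exact: mulr_ge0 (disc_poisson_ge0 _ _) (wc_ge0 _).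
Qed.

Let Pint_kernel z : disc z -> Pint w z = (\int[leb]_t kernel (z, t))%E.
Proof.
move=> zD; rewrite /Pint /mint.
transitivity (\int[leb]_t (((2 * pi)^-1)%:E * (poisson z t * wc t)%:E))%E;
  last first.
  apply: eq_integral => t _; rewrite /kernel /disc_poisson /= indicE.
  by rewrite mem_set // mul1r EFinM.
rewrite ge0_integralZl_EFin ?two_pi_inv_ge0 //; last 2 first.
- by move=> t _; rewrite lee_fin mulr_ge0 ?poisson_ge0.
- apply/measurable_EFinP; apply: measurable_funM => //.
  exact: measurable_fun_pair2 z (@measurable_poisson R).
congr (_ * _)%E; rewrite [LHS]integral_mkcond; apply: eq_integral => t _.
by rewrite /wc !patchE; case: ifPn; rewrite ?mulr0.
Qed.

Let kernel_balayage t :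
  (\int[mu]_z kernel (z, t) = ((2 * pi)^-1)%:E * ((wc t)%:E * balayage mu t))%E.
Proof.
rewrite balayageE.
transitivity (\int[mu]_z (((2 * pi)^-1 * wc t)%:E * (disc_poisson z t)%:E))%E.
  by apply: eq_integral => z _; rewrite /kernel /= -EFinM; congr EFin; ring.
rewrite ge0_integralZl_EFin ?mulr_ge0 ?two_pi_inv_ge0 //; last 2 first.
- by move=> z _; rewrite lee_fin disc_poisson_ge0.
- apply/measurable_EFinP.
  exact: measurable_fun_pair1 t (@measurable_disc_poisson R).
by rewrite EFinM muleA.
Qed.

Lemma integral_Pint :
  (\int[mu]_(z in disc) Pint w z = mint (fun t => (w t)%:E * balayage mu t))%E.
Proof.
transitivity (\int[mu]_z \int[leb]_t kernel (z, t))%E.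
  rewrite integral_mkcond; apply: eq_integral => z _; rewrite patchE.
  case: ifPn => [/set_mem /Pint_kernel //|zD].
  apply/esym/integral0_eq => t _.
  by rewrite /kernel /disc_poisson /= indicE (negbTE zD) !mul0r mulr0.
rewrite (@fubini_tonelli _ _ _ _ _ mu leb _ measurable_kernel kernel_ge0).
under eq_integral do rewrite kernel_balayage.
rewrite /mint ge0_integralZl_EFin ?two_pi_inv_ge0 //; last 2 first.
- by move=> t _; rewrite mule_ge0 ?lee_fin ?balayage_ge0.
- apply: emeasurable_funM; first exact/measurable_EFinP.
  exact: measurable_balayage.
congr (_ * _)%E; apply/esym; rewrite [LHS]integral_mkcond.
apply: eq_integral => t _; rewrite /wc !patchE.
by case: ifPn; rewrite ?mul0e.
Qed.

End integral_Pint.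

Section young_function.
Context (R : realType) (phi psi : R -> R).
Hypothesis phi_sc : strongly_convex phi.
Hypothesis psi_mod : modification phi psi.

Lemma phi_ge0 x : 0 <= phi x.
Proof. by case: phi_sc => h _; exact: h. Qed.

Lemma phi_nondecreasing x y : x <= y -> phi x <= phi y.
Proof. by case: phi_sc => _ [_ [h _]]; exact: h. Qed.

Lemma psi0 : psi 0 = 0.
Proof. by case: psi_mod. Qed.

Lemma psi_ge0 x : 0 <= x -> 0 <= psi x.
Proof. by case: psi_mod => _ [h _]; exact: h. Qed.

Lemma psiZ_le s x : 0 <= s <= 1 -> 0 <= x -> psi (s * x) <= s * psi x.
Proof.
case: psi_mod => p0 [_ [cvx _]] s01 x0.
by have := cvx x 0 s x0 (lexx 0) s01; rewrite mulr0 addr0 p0 mulr0 addr0.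
Qed.

Lemma psi_nondecreasing x y : 0 <= x -> x <= y -> psi x <= psi y.
Proof.
move=> x0 xy; have [y0|y0] := eqVneq y 0.
  by have -> : x = y by apply/le_anti; rewrite xy /= y0 x0.
have yp : 0 < y by rewrite lt_neqAle eq_sym y0 (le_trans x0 xy).
have s01 : 0 <= x / y <= 1.
  by rewrite divr_ge0 ?(ltW yp) //= ler_pdivrMr // mul1r.
rewrite -(divfK y0 x); apply: le_trans (psiZ_le s01 (ltW yp)) _.
by case/andP: s01 => _ s1; apply: ler_piMl => //; exact/psi_ge0/ltW.
Qed.

Lemma psi_phi_close : exists2 C, 0 <= C & forall x, 0 <= x ->
  psi x <= phi x + C /\ phi x <= psi x + C.
Proof.
case: psi_mod => _ [_ [_ [t1 [t10 psi_phi]]]].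
exists (phi t1) => [|x x0]; first exact: phi_ge0.
have [t1x|xt1] := leP t1 x.
  by rewrite psi_phi // lerDl phi_ge0.
split; last first.
  by apply: le_trans (phi_nondecreasing (ltW xt1)) _; rewrite lerDr psi_ge0.
apply: le_trans (psi_nondecreasing x0 (ltW xt1)) _.
by rewrite psi_phi // lerDr phi_ge0.
Qed.

Lemma psi_dominates_id : exists2 C, 0 <= C & forall x, 0 <= x -> x <= psi x + C.
Proof.
case: psi_mod => _ [_ [_ [t1 [t10 psi_phi]]]].
case: phi_sc => _ [_ [_ [superlin _]]]; have [B hB] := superlin 1.
have C0 : 0 <= Num.max B t1 + 1 by rewrite addr_ge0 // le_max t10 orbT.
exists (Num.max B t1 + 1) => // x x0.
have [xC|Cx] := leP (Num.max B t1 + 1) x; last by have := psi_ge0 x0; lra.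
have : Num.max B t1 < x by apply: lt_le_trans xC; rewrite ltrDl.
rewrite gt_max => /andP[Bx t1x].
have x_gt0 : 0 < x := le_lt_trans t10 t1x.
have := hB x Bx; rewrite ltr_pdivlMr // mul1r => /ltW phix.
rewrite psi_phi; last exact: ltW.
by rewrite (le_trans phix) // lerDl.
Qed.

Lemma measurable_psi_comp (D : set R) (f : R -> R) : (forall x, 0 <= f x) ->
  measurable_fun D f -> measurable_fun D (fun x => (psi (f x))%:E).
Proof.
move=> f0 mf; apply/measurable_EFinP.
have -> : (fun x => psi (f x)) = (fun x => psi (Num.max x 0)) \o f.
  by apply/funext => x /=; rewrite max_l.
apply: measurableT_comp mf => //; apply: nondecreasing_measurable => // x y xy.
apply: psi_nondecreasing; first by rewrite le_max lexx orbT.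
by rewrite ge_max le_max xy /= le_max lexx orbT.
Qed.

Lemma measurable_phi_comp (D : set R) (f : R -> R) :
  measurable_fun D f -> measurable_fun D (fun x => (phi (f x))%:E).
Proof.
move=> mf; apply/measurable_EFinP; apply: measurableT_comp mf => //.
by apply: nondecreasing_measurable => // x y; exact: phi_nondecreasing.
Qed.

Lemma measurable_normr_div (D : set R) (u : R -> R) (c : R) :
  measurable_fun D u -> measurable_fun D (fun x => `|u x| / c).
Proof.
by move=> mu; apply: measurable_funM => //; exact: measurableT_comp mu.
Qed.

Lemma Lphi_modular_div u : Lphi phi u -> exists K, forall c, 1 <= c ->
  (mint (fun x => (psi (`|u x| / c))%:E) <= (K / c)%:E)%E.
Proof.
case=> mu fin; have [C C0 close] := psi_phi_close.
set A := mint (fun x => (phi `|u x|)%:E) in fin.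
have A0 : (0 <= A)%E by apply: mint_ge0 => x _; rewrite lee_fin phi_ge0.
have Afin : A \is a fin_num by rewrite ge0_fin_numE.
have mphiu := measurable_phi_comp (measurableT_comp (@normr_measurable _ _) mu).
exists (fine A + C) => c c1; have c0 : 0 < c by apply: lt_le_trans c1.
have ic01 : 0 <= c^-1 <= 1 by rewrite invr_ge0 ltW //= invr_le1 // unitfE gt_eqF.
apply: (@le_trans _ _ (mint (fun x => (c^-1)%:E * ((phi `|u x|)%:E + C%:E))))%E.
  apply: le_mint.
  - by move=> x _; rewrite lee_fin psi_ge0 // divr_ge0 // ltW.
  - apply: measurable_psi_comp; last exact: measurable_normr_div.
    by move=> x; rewrite divr_ge0 // ltW.
  - apply: emeasurable_funM; first exact: measurable_cst.
    by apply: emeasurable_funD => //; exact: measurable_cst.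
  move=> x _; rewrite -EFinD -EFinM lee_fin mulrC.
  apply: le_trans (psiZ_le ic01 (normr_ge0 _)) _.
  by rewrite ler_wpM2l ?invr_ge0 ?(ltW c0) //; case: (close _ (normr_ge0 (u x))).
have phiC0 x : (0 <= (phi `|u x|)%:E + C%:E)%E.
  by rewrite -EFinD lee_fin addr_ge0 ?phi_ge0.
rewrite mintZl ?invr_ge0 ?(ltW c0) //; last first.
  by apply: emeasurable_funD => //; exact: measurable_cst.
rewrite mintD; [|by move=> x _; rewrite lee_fin phi_ge0|exact: mphiu
  |by move=> x _; rewrite lee_fin|exact: measurable_cst].
by rewrite mint_cst -/A -(fineK Afin) -EFinD -EFinM lee_fin mulrC.
Qed.

Lemma Lphi_modular_le1 u : Lphi phi u -> exists2 c, 1 <= c &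
  (mint (fun x => (psi (`|u x| / c))%:E) <= 1%:E)%E.
Proof.
move=> /Lphi_modular_div[K hK]; exists (Num.max 1 K); first by rewrite le_max lexx.
apply: le_trans (hK _ _) _; first by rewrite le_max lexx.
by rewrite lee_fin ler_pdivrMr ?lt_max ?ltr01 // mul1r le_max lexx orbT.
Qed.

Lemma orlicz_norm_div_le1 u : Lphi phi u ->
  exists2 c, 1 <= c & orlicz_norm psi (fun x => u x / c) <= 1.
Proof.
move=> /Lphi_modular_le1[c c1 hc]; have c0 : 0 < c by apply: lt_le_trans c1.
exists c => //; apply: ge_inf; first by exists 0 => t [/ltW].
split; first exact: ltr01.
apply: le_trans hc; rewrite le_eqVlt; apply/orP; left; apply/eqP.
by congr mint; apply/funext => x; rewrite divr1 normrM normfV (gtr0_norm c0).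
Qed.

Lemma orlicz_norm_le1_modular u : Lphi phi u -> orlicz_norm psi u <= 1 ->
  (mint (fun x => (psi (`|u x| / 2))%:E) <= 2%:E)%E.
Proof.
move=> Lu nu; have [mu _] := Lu; have [c c1 hc] := Lphi_modular_le1 Lu.
have [t [t0 ht] t2] : exists2 t, 0 < t /\
    (mint (fun x => (psi (`|u x| / t))%:E) <= t%:E)%E & t < 2.
  apply: inf_lt; last by apply: le_lt_trans nu _; rewrite ltr1n.
  exists c; split; first exact: lt_le_trans c1.
  by apply: le_trans hc _; rewrite lee_fin.
apply: le_trans (le_trans ht _); last by rewrite lee_fin ltW.
apply: le_mint.
- by move=> x _; rewrite lee_fin psi_ge0 // divr_ge0.
- apply: measurable_psi_comp; last exact: measurable_normr_div.
  by move=> x; rewrite divr_ge0.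
- apply: measurable_psi_comp; last exact: measurable_normr_div.
  by move=> x; rewrite divr_ge0 // ltW.
move=> x _; rewrite lee_fin; apply: psi_nondecreasing; first by rewrite divr_ge0.
by rewrite ler_wpM2l // lef_pV2 // ?ltW // posrE.
Qed.

End young_function.

Section dual_norm_balayage.
Context (R : realType) (phi psi : R -> R).
Context (mu : {finite_measure set (R * R)%type -> \bar R}).
Hypothesis phi_sc : strongly_convex phi.
Hypothesis psi_mod : modification phi psi.

Definition orlicz_ball_ge0 : set (R -> R) :=
  [set w | (forall x, 0 <= w x) /\ Lphi phi w /\ orlicz_norm psi w <= 1].

Lemma orlicz_norm_abs (u : R -> R) :
  orlicz_norm psi (fun x => `|u x|) = orlicz_norm psi u.
Proof.
rewrite /orlicz_norm; congr inf; apply/funext => t /=.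
by under eq_fun do rewrite normr_id.
Qed.

Lemma Lphi_abs (u : R -> R) : Lphi phi u -> Lphi phi (fun x => `|u x|).
Proof.
case=> mu_ fu; split; first exact: measurableT_comp mu_.
by under eq_fun do rewrite normr_id.
Qed.

Lemma dual_norm_balayageE : dual_norm phi psi (balayage mu) =
  ereal_sup [set (\int[mu]_(z in disc) Pint w z)%E | w in orlicz_ball_ge0].
Proof.
have absB t : `|balayage mu t|%E = balayage mu t by rewrite gee0_abs ?balayage_ge0.
rewrite /dual_norm; congr ereal_sup; apply/seteqP; split => _ [w [Lw nw] <-].
  have [mw _] := Lw.
  exists (fun x => `|w x|).
    by split=> //; split; [exact: Lphi_abs | rewrite orlicz_norm_abs].
  rewrite integral_Pint //; last exact: measurableT_comp mw.
  by congr mint; apply/funext => x; rewrite abseM absB abse_EFin muleC.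
case: nw => Lw2 nw2; have [mw _] := Lw2; exists w => //.
rewrite integral_Pint //; congr mint; apply/funext => x.
by rewrite abseM absB abse_EFin muleC ger0_norm.
Qed.

Lemma integral_Pint_lty :
  (ereal_sup [set (\int[mu]_(z in disc) Pint w z)%E | w in orlicz_ball_ge0]
    < +oo)%E ->
  forall w, (forall x, 0 <= w x) -> Lphi phi w ->
    (\int[mu]_(z in disc) Pint w z < +oo)%E.
Proof.
move=> supfin w w0 Lw; have [mw fw] := Lw.
have [c c1 nc] := orlicz_norm_div_le1 phi_sc psi_mod Lw.
have c0 : 0 < c by apply: lt_le_trans c1.
pose wc x := w x / c.
have wc0 x : 0 <= wc x by rewrite divr_ge0 // ltW.
have mwc : measurable_fun circ wc by apply: measurable_funM.
have Wwc : orlicz_ball_ge0 wc.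
  split=> //; split=> //; split=> //; apply: le_lt_trans fw; apply: le_mint.
  - by move=> x _; rewrite lee_fin phi_ge0.
  - by apply: (measurable_phi_comp phi_sc); exact: measurableT_comp mwc.
  - by apply: (measurable_phi_comp phi_sc); exact: measurableT_comp mw.
  move=> x _; rewrite lee_fin; apply: phi_nondecreasing => //.
  by rewrite /wc normrM normfV (gtr0_norm c0) ler_pdivrMr // ler_peMr.
set X := (\int[mu]_(z in disc) Pint wc z)%E.
have X0 : (0 <= X)%E.
  by rewrite /X integral_Pint //; apply: mint_ge0; exact: mul_balayage_ge0.
have Xfin : X \is a fin_num.
  rewrite ge0_fin_numE // (le_lt_trans _ supfin) //.
  by apply: ereal_sup_ubound; exists wc.
have -> : (\int[mu]_(z in disc) Pint w z = c%:E * X)%E.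
  rewrite /X !integral_Pint // -mintZl ?(ltW c0) //; last 2 first.
  - exact: mul_balayage_ge0.
  - exact: measurable_mul_balayage.
  by congr mint; apply/funext => t; rewrite muleA -EFinM /wc mulrC divfK ?gt_eqF.
by rewrite -(fineK Xfin) -EFinM ltry.
Qed.

End dual_norm_balayage.

Section geometric_weight.
Context {R : realType}.
Local Notation leb := (@lebesgue_measure R).

Definition geom_weight (k : nat) : R := ((2 ^ (k + 1))%:R)^-1.

Lemma geom_weight_gt0 k : 0 < geom_weight k.
Proof. by rewrite invr_gt0 ltr0n expn_gt0. Qed.

Lemma geom_weight_le1 k : geom_weight k <= 1.
Proof. by rewrite invf_le1 ?ltr0n ?expn_gt0 // ler1n expn_gt0. Qed.

Lemma nneseries_geom_weight (D : R) :
  (\sum_(k <oo) (D * geom_weight k)%:E = D%:E)%E.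
Proof.
have := @cvg_geometric_eseries_half R D 0; rewrite expr0 divr1.
exact: cvg_lim.
Qed.

Lemma nneseries_ge_term (g : nat -> \bar R) : (forall k, 0 <= g k)%E ->
  forall n, (g n <= \sum_(k <oo) g k)%E.
Proof.
move=> g0 n; apply: le_trans (nneseries_lim_ge n.+1 (fun k _ _ => g0 k)).
by rewrite big_nat_recr //= leeDr // sume_ge0.
Qed.

Lemma integral_nneseries_le (g : nat -> R -> \bar R) (D : R) :
  (forall k, measurable_fun circ (g k)) -> (forall k t, circ t -> 0 <= g k t)%E ->
  (forall k, mint (g k) <= (D * geom_weight k)%:E)%E ->
  (mint (fun t => \sum_(k <oo) g k t) <= D%:E)%E.
Proof.
move=> mg g0 hg.
have int_le : (\int[leb]_(t in circ) \sum_(k <oo) g k t <= (2 * pi * D)%:E)%E.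
  rewrite integral_nneseries //; last exact: measurable_circ.
  rewrite -nneseries_geom_weight; apply: lee_nneseries => [k _ _|k _].
    by apply: integral_ge0 => t; exact: g0.
  rewrite integral_circE -[2 * pi * D * _]mulrA (EFinM (2 * pi)).
  by rewrite lee_wpmul2l // lee_fin ltW // two_pi_gt0.
rewrite /mint; apply: le_trans (lee_wpmul2l _ int_le) _.
  by rewrite lee_fin two_pi_inv_ge0.
by rewrite -EFinM mulrA mulVf ?mul1r // gt_eqF // two_pi_gt0.
Qed.

End geometric_weight.

Section envelope.
Context (R : realType) (phi psi : R -> R).
Hypothesis phi_sc : strongly_convex phi.
Hypothesis psi_mod : modification phi psi.
Local Notation leb := (@lebesgue_measure R).
Variable x : nat -> R -> R.
Hypothesis x_ge0 : forall k t, 0 <= x k t.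
Hypothesis measurable_x : forall k, measurable_fun circ (x k).
Variable D : R.
Hypothesis modular_x : forall k, (mint (fun t => (psi (x k t))%:E) <= D%:E)%E.

Let wx k t : \bar R := (geom_weight k * x k t)%:E.

Let wx_ge0 k t : (0 <= wx k t)%E.
Proof. by rewrite lee_fin mulr_ge0 // ltW // geom_weight_gt0. Qed.

Let measurable_wx k : measurable_fun circ (wx k).
Proof. by apply/measurable_EFinP; apply: measurable_funM. Qed.

Let psi_x_ge0 k t : 0 <= psi (x k t).
Proof. exact: psi_ge0 psi_mod _ (x_ge0 k t). Qed.

Let measurable_psi_x k : measurable_fun circ (fun t => (psi (x k t))%:E).
Proof. by apply: (measurable_psi_comp psi_mod). Qed.

Let wpsix k t : \bar R := (geom_weight k * psi (x k t))%:E.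

Let wpsix_ge0 k t : (0 <= wpsix k t)%E.
Proof. by rewrite lee_fin mulr_ge0 ?psi_x_ge0 // ltW // geom_weight_gt0. Qed.

Let measurable_wpsix k : measurable_fun circ (wpsix k).
Proof.
apply/measurable_EFinP; apply: measurable_funM => //.
by apply/measurable_EFinP; exact: measurable_psi_x.
Qed.

Let sup_wx t : \bar R := esups (fun k => wx k t) 0.

Let wx_le_sup k t : (wx k t <= sup_wx t)%E.
Proof. by apply: ereal_sup_ubound; exists k. Qed.

Let measurable_sup_wx : measurable_fun circ sup_wx.
Proof. exact: measurable_fun_esups. Qed.

Let measurable_series_wx : measurable_fun circ (fun t => \sum_(k <oo) wx k t)%E.
Proof.
exact: ge0_emeasurable_sum (fun k t _ _ => wx_ge0 k t) (fun k _ => measurable_wx k).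
Qed.

Let mint_series_wx_lty : (mint (fun t => \sum_(k <oo) wx k t) < +oo)%E.
Proof.
have [C C0 xC] := psi_dominates_id phi_sc psi_mod.
apply: (@le_lt_trans _ _ (D + C)%:E); last exact: ltry.
apply: integral_nneseries_le => // k.
have -> : mint (wx k) = ((geom_weight k)%:E * mint (fun t => (x k t)%:E))%E.
  rewrite -mintZl ?ltW ?geom_weight_gt0 //; last exact/measurable_EFinP.
  by move=> t _; rewrite lee_fin.
rewrite mulrC EFinM; apply: lee_wpmul2l; first by rewrite lee_fin ltW ?geom_weight_gt0.
apply: (@le_trans _ _ (mint (fun t => (psi (x k t))%:E + C%:E))%E).
  apply: le_mint.
  - by move=> t _; rewrite lee_fin.
  - exact/measurable_EFinP.
  - by apply: emeasurable_funD => //; exact: measurable_cst.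
  - by move=> t _; rewrite -EFinD lee_fin xC.
rewrite mintD; [|by move=> t _; rewrite lee_fin psi_x_ge0|exact: measurable_psi_x
  |by move=> t _; rewrite lee_fin|exact: measurable_cst].
by rewrite mint_cst EFinD leeD2r.
Qed.

Let sup_wx_integrable : leb.-integrable circ sup_wx.
Proof.
apply/integrableP; split; first exact: measurable_sup_wx.
apply: (@le_lt_trans _ _ (\int[leb]_(t in circ) \sum_(k <oo) wx k t)%E).
  apply: ge0_le_integral => //.
  - exact: measurable_circ.
  - apply: (measurableT_comp (f := abse) (g := sup_wx)) => //;
      exact: abse_measurable.
  - move=> t _; rewrite gee0_abs; last exact: le_trans (wx_ge0 0 t) (wx_le_sup 0 t).
    by apply: ge_ereal_sup => _ [k _ <-]; exact: nneseries_ge_term.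
by rewrite integral_circE lte_mul_pinfty ?lee_fin ?ltW ?two_pi_gt0.
Qed.

(* The factor 1/2 puts envelope t strictly below sup_wx t whenever the latter
   is finite and positive, hence below a single term wx k t. *)
Definition envelope (t : R) : R := fine (sup_wx t) / 2.

Lemma envelope_ge0 t : 0 <= envelope t.
Proof.
by rewrite divr_ge0 // fine_ge0 // (le_trans (wx_ge0 0 t) (wx_le_sup 0 t)).
Qed.

Lemma measurable_envelope : measurable_fun circ envelope.
Proof. by apply: measurable_funM => //; exact: measurableT_comp. Qed.

Lemma psi_envelope_le t :
  ((psi (envelope t))%:E <= \sum_(k <oo) wpsix k t)%E.
Proof.
have term_ge0 := wpsix_ge0^~ t.
have [g0|gn0] := eqVneq (envelope t) 0.
  by rewrite g0 (psi0 psi_mod) (le_trans (term_ge0 0%N)) // nneseries_ge_term.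
have sup_fin : sup_wx t \is a fin_num.
  by move: gn0; rewrite /envelope; case: (sup_wx t) => //=; rewrite mul0r eqxx.
have sup_gt0 : 0 < fine (sup_wx t).
  rewrite lt_def fine_ge0 ?(le_trans (wx_ge0 0 t) (wx_le_sup 0 t)) // andbT.
  by move: gn0; apply: contra => /eqP f0; rewrite /envelope f0 mul0r.
have : ((envelope t)%:E < sup_wx t)%E.
  by rewrite -(fineK sup_fin) lte_fin /envelope ltr_pdivrMr // ltr_pMr // ltr1n.
move=> /ereal_sup_gt[_ [k _ <-] lt_envelope].
apply: le_trans (nneseries_ge_term term_ge0 k); rewrite lee_fin.
apply: le_trans (psiZ_le psi_mod _ (x_ge0 k t)).
  apply: (psi_nondecreasing psi_mod (envelope_ge0 t)).
  by move: lt_envelope; rewrite lte_fin => /ltW.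
by rewrite (ltW (geom_weight_gt0 k)) geom_weight_le1.
Qed.

Lemma mint_psi_envelope_le : (mint (fun t => (psi (envelope t))%:E) <= D%:E)%E.
Proof.
apply: (@le_trans _ _ (mint (fun t => \sum_(k <oo) wpsix k t)%E)).
  apply: le_mint => //; last by move=> t _; exact: psi_envelope_le.
  - by move=> t _; rewrite lee_fin (psi_ge0 psi_mod (envelope_ge0 t)).
  - apply: (measurable_psi_comp psi_mod); first exact: envelope_ge0.
    exact: measurable_envelope.
  - exact: ge0_emeasurable_sum (fun k t _ _ => wpsix_ge0 k t)
                               (fun k _ => measurable_wpsix k).
apply: integral_nneseries_le => // k.
rewrite (_ : mint _ = (geom_weight k)%:E * mint (fun t => (psi (x k t))%:E))%E.
  by rewrite mulrC EFinM lee_wpmul2l // lee_fin ltW // geom_weight_gt0.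
rewrite -mintZl //; first exact: ltW (geom_weight_gt0 k).
by move=> t _; rewrite lee_fin psi_x_ge0.
Qed.

Lemma Lphi_envelope : Lphi phi envelope.
Proof.
have [C C0 close] := psi_phi_close phi_sc psi_mod.
split; first exact: measurable_envelope.
have -> : (fun t => (phi `|envelope t|)%:E) = (fun t => (phi (envelope t))%:E).
  by apply/funext => t; rewrite ger0_norm ?envelope_ge0.
have mpsi_envelope : measurable_fun circ (fun t => (psi (envelope t))%:E).
  apply: (measurable_psi_comp psi_mod); first exact: envelope_ge0.
  exact: measurable_envelope.
apply: le_lt_trans (_ : _ <= mint (fun t => (psi (envelope t))%:E + C%:E))%E _.
  apply: le_mint.
  - by move=> t _; rewrite lee_fin phi_ge0.
  - exact: measurable_phi_comp phi_sc _ _ measurable_envelope.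
  - by apply: emeasurable_funD => //; exact: measurable_cst.
  by move=> t _; rewrite -EFinD lee_fin; case: (close _ (envelope_ge0 t)).
rewrite mintD; [|by move=> t _; rewrite lee_fin (psi_ge0 psi_mod (envelope_ge0 t))
  |exact: mpsi_envelope|by move=> t _; rewrite lee_fin|exact: measurable_cst].
by rewrite mint_cst (le_lt_trans (leeD2r _ mint_psi_envelope_le)) // -EFinD ltry.
Qed.

Lemma envelope_ae_ge :
  {ae leb, forall t, circ t -> forall k, geom_weight k * x k t / 2 <= envelope t}.
Proof.
have mcirc : measurable (circ : set (measurableTypeR R)) by exact: measurable_circ.
apply: filterS (integrable_ae mcirc sup_wx_integrable) => t sup_fin ct k.
have := wx_le_sup k t; rewrite -(fineK (sup_fin ct)) lee_fin => wx_le.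
by rewrite /envelope ler_wpM2r // invr_ge0.
Qed.

Lemma mint_envelope_ge (g : R -> \bar R) k : (forall t, 0 <= g t)%E ->
  measurable_fun circ g ->
  ((geom_weight k / 2)%:E * mint (fun t => (x k t)%:E * g t) <=
   mint (fun t => (envelope t)%:E * g t))%E.
Proof.
move=> g0 mg.
have mvg (v : R -> R) : measurable_fun circ v ->
    measurable_fun circ (fun t => (v t)%:E * g t)%E.
  by move=> mv; apply: emeasurable_funM => //; exact/measurable_EFinP.
have wk_ge0 : 0 <= geom_weight k / 2 :> R by rewrite divr_ge0 // ltW // geom_weight_gt0.
rewrite -mintZl //; [|by move=> t _; rewrite mule_ge0 ?lee_fin|exact: mvg].
apply: ae_le_mint.
- by move=> t _; rewrite !mule_ge0 ?lee_fin.
- by apply: emeasurable_funM => //; exact: mvg.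
- by move=> t _; rewrite mule_ge0 ?lee_fin ?envelope_ge0.
- by apply: mvg; exact: measurable_envelope.
apply: filterS envelope_ae_ge; first exact: (ae_filter_ringOfSetsType leb).
move=> t env_ge ct; rewrite muleA -EFinM lee_wpmul2r // lee_fin.
by rewrite mulrAC env_ge.
Qed.

End envelope.

Lemma gt_nat_pinfty (R : realType) (e : \bar R) :
  (forall k : nat, (k%:R%:E < e)%E) -> e = +oo%E.
Proof.
case: e => [r| |] // gt_e; last by have := gt_e 0%N.
have := gt_e (Num.truncn r).+1; rewrite lte_fin => lt_r.
by have := lt_trans lt_r (truncnS_gt r); rewrite ltxx.
Qed.

Section sup_integral_Pint.
Context (R : realType) (phi psi : R -> R).
Context (mu : {finite_measure set (R * R)%type -> \bar R}).
Hypothesis phi_sc : strongly_convex phi.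
Hypothesis psi_mod : modification phi psi.
Local Notation J w := (mint (fun t => (w t)%:E * balayage mu t)%E).

Lemma sup_integral_Pint_lty :
  (forall w : R -> R, (forall x, 0 <= w x) -> Lphi phi w ->
     (\int[mu]_(z in disc) Pint w z < +oo)%E) ->
  (ereal_sup [set (\int[mu]_(z in disc) Pint w z)%E | w in orlicz_ball_ge0 phi psi]
    < +oo)%E.
Proof.
move=> Pint_fin; rewrite ltey; apply/eqP => sup_oo.
have big k : exists u, orlicz_ball_ge0 phi psi u /\
    ((k%:R * 4 / geom_weight k)%:E < J u)%E.
  have : ((k%:R * 4 / geom_weight k)%:E < ereal_sup
      [set (\int[mu]_(z in disc) Pint w z)%E | w in orlicz_ball_ge0 phi psi])%E.
    by rewrite sup_oo ltry.
  move=> /ereal_sup_gt[_ [u ball_u <-] lt_u]; exists u; split => //.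
  by have [u_ge0 [[mu_ _] _]] := ball_u; rewrite -integral_Pint.
have [u u_prop] := choice big.
have u_ge0 k t : 0 <= u k t by have [[]] := u_prop k.
have Lu k : Lphi phi (u k) by have [[_ []]] := u_prop k.
have mu_ k : measurable_fun circ (u k) by have [] := Lu k.
pose x k t := u k t / 2.
have x_ge0 k t : 0 <= x k t by rewrite divr_ge0.
have mx k : measurable_fun circ (x k) by exact: measurable_funM.
have modular_x k : (mint (fun t => (psi (x k t))%:E) <= 2%:E)%E.
  have [_ [_ nu]] := (u_prop k).1.
  have := orlicz_norm_le1_modular phi_sc psi_mod (Lu k) nu.
  by congr (_ <= _)%E; congr mint; apply/funext => t; rewrite ger0_norm.
have Lw := Lphi_envelope phi_sc psi_mod x_ge0 mx modular_x.
have w_ge0 := envelope_ge0 x_ge0.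
have Jw_fin : (J (envelope x) < +oo)%E.
  by rewrite -integral_Pint //; [exact: Pint_fin | exact: measurable_envelope].
suff : J (envelope x) = +oo%E by move=> Jw_oo; rewrite Jw_oo in Jw_fin.
apply: gt_nat_pinfty => k.
apply: lt_le_trans _ (mint_envelope_ge phi_sc psi_mod x_ge0 mx modular_x k
  (balayage_ge0 mu) (measurable_funTS (measurable_balayage mu))).
have -> : J (x k) = ((2^-1)%:E * J (u k))%E.
  rewrite -mintZl ?invr_ge0 //; last 2 first.
  - exact: mul_balayage_ge0.
  - exact: measurable_mul_balayage.
  by congr mint; apply/funext => t; rewrite muleA -EFinM mulrC.
have wk_gt0 : 0 < geom_weight k / 2 / 2 :> R by rewrite !divr_gt0 // geom_weight_gt0.
rewrite muleA -EFinM.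
have -> : (k%:R%:E =
    (geom_weight k / 2 / 2)%:E * (k%:R * 4 / geom_weight k)%:E :> \bar R)%E.
  by rewrite -EFinM; congr EFin; field; rewrite gt_eqF // geom_weight_gt0.
by rewrite lte_pmul2l //; exact: (u_prop k).2.
Qed.

End sup_integral_Pint.

Theorem proposition5p1 (R : realType) (phi psi : R -> R)
  (mu : {finite_measure set (R * R)%type -> \bar R}) :
  strongly_convex phi -> modification phi psi ->
  ((dual_norm phi psi (balayage mu) < +oo)%E <->
     (forall w : R -> R, (forall x, 0 <= w x) -> Lphi phi w ->
        (\int[mu]_(z in disc) Pint w z < +oo)%E)) /\
  dual_norm phi psi (balayage mu) =
    ereal_sup [set (\int[mu]_(z in disc) Pint w z)%E |
               w in [set w : R -> R | (forall x, 0 <= w x) /\ Lphi phi w /\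
                                      orlicz_norm psi w <= 1]].
Proof.
move=> phi_sc psi_mod; rewrite dual_norm_balayageE; split=> //; split.
- exact: integral_Pint_lty.
- exact: sup_integral_Pint_lty.
Qed.
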